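(* Let $m\ge3$ and let $\mathscr{P}$ be a symmetric irreducible transition probability tensor of order $m$ and dimension $2$. Then $\mathscr{P}$ has a unique stationary probability vector, namely $(\tfrac12,\tfrac12)^\top$.
   Context: $\mathscr{P}=(p_{i_1\cdots i_m})$ is a tensor of order $m$ and dimension $n$ with real entries indexed by $i_1,\dots,i_m\in\{1,\dots,n\}$; here $n=2$. It is symmetric if its entries are invariant under every permutation of indices. It is a transition probability tensor if $0\le p_{i_1\cdots i_m}\le1$ and $\sum_{i_1=1}^np_{i_1i_2\cdots i_m}=1$ for all $i_2,\dots,i_m$. The tensor is reducible if there is a nonempty proper subset $I\subset\{1,\dots,n\}$ such that $p_{i_1i_2\cdots i_m}=0$ for all $i_1\in I$ and all $i_2,\dots,i_m\notin I$. It is irreducible if it is not reducible. A stationary probability vector of $\mathscr{P}$ is a vector $z=(z_1,z_2)^\top$ with $z_1,z_2\ge0$ and $z_1+z_2=1$ such that $$\sum_{i_2,\dots,i_m=1}^2p_{ii_2\cdots i_m}z_{i_2}\cdots z_{i_m}=z_i\quad\text{for } i=1,2.$$ *)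

From HB Require Import structures.
From mathcomp Require Import all_boot all_order all_algebra all_fingroup.
Set Implicit Arguments. Unset Strict Implicit. Unset Printing Implicit Defensive.
Import Order.TTheory GRing.Theory Num.Theory.
Local Open Scope ring_scope.

(* A tensor of order m and dimension n over R: an entry p_{i_1...i_m} for each
   index function f : 'I_m -> 'I_n, where f k is the (k+1)-th index i_{k+1}. *)
Definition tensor (R : Type) (m n : nat) := {ffun 'I_m -> 'I_n} -> R.

Definition tensor_symmetric (R : Type) m n (P : tensor R m n) : Prop :=
  forall (s : 'S_m) (f : {ffun 'I_m -> 'I_n}),
    P [ffun k => f (s k)] = P f.

Definition transition_tensor (R : numDomainType) m n (P : tensor R m n) : Prop :=
  (forall f, 0 <= P f <= 1) /\
  (forall g : {ffun 'I_m -> 'I_n},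
     \sum_(f : {ffun 'I_m -> 'I_n} |
            [forall k : 'I_m, (val k != 0%N) ==> (f k == g k)]) P f = 1).

Definition tensor_reducible (R : nzRingType) m n (P : tensor R m n) : Prop :=
  exists I : {set 'I_n},
    [/\ I != set0, I != setT &
        forall f : {ffun 'I_m -> 'I_n},
          (forall k : 'I_m, val k = 0%N -> f k \in I) ->
          (forall k : 'I_m, val k <> 0%N -> f k \notin I) ->
          P f = 0].

Definition tensor_irreducible (R : nzRingType) m n (P : tensor R m n) : Prop :=
  ~ tensor_reducible P.

Definition stationary_prob (R : numDomainType) m n (P : tensor R m n)
    (z : 'I_n -> R) : Prop :=
  [/\ forall i, 0 <= z i,
      \sum_(i < n) z i = 1 &
      forall i : 'I_n,
        \sum_(f : {ffun 'I_m -> 'I_n} |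
               [forall k : 'I_m, (val k == 0%N) ==> (f k == i)])
          P f * \prod_(k : 'I_m | val k != 0%N) z (f k) = z i].

From HB Require Import structures.
From mathcomp Require Import all_boot all_order all_algebra all_fingroup.
From mathcomp Require Import ring lra.
Import Order.TTheory GRing.Theory Num.Theory.
Local Open Scope ring_scope.
Set Implicit Arguments.
Unset Strict Implicit.
Unset Printing Implicit Defensive.

(* In dimension 2 the transition property says that changing the first index
   turns p_f into 1 - p_f, and by symmetry the same holds for every index.
   Hence (p_f - 1/2) (-1)^(f_1 + ... + f_m) does not depend on f, i.e.
   p_f = 1/2 + b (-1)^(f_1 + ... + f_m) with b = p_{1...1} - 1/2.  The
   stationarity equations then read z_i = (z_1 + z_2)^(m-1)/2 +- b (z_1 - z_2)^(m-1),
   so t = z_1 - z_2 solves t = 2b t^(m-1) with |t|, |2b| <= 1.  This forces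
   t = 0 except when 2b = 1, or 2b = -1 and m is odd, and these are exactly
   the cases in which p vanishes on an index pattern witnessing reducibility. *)

Lemma ord2P (j : 'I_2) : j = ord0 \/ j = ord_max.
Proof. by case: j => [[|[|//]] ?]; [left|right]; apply/val_inj. Qed.

Lemma sum_ord2 (R : nmodType) (F : 'I_2 -> R) : \sum_(j < 2) F j = F ord0 + F ord_max.
Proof. by rewrite big_ord_recr big_ord1; congr (F _ + _); apply: val_inj. Qed.

Section FfunSet.
Variables (I A : finType).

Definition ffun_set (f : {ffun I -> A}) (k : I) (v : A) : {ffun I -> A} :=
  [ffun j => if j == k then v else f j].

Lemma ffun_set_id f k : ffun_set f k (f k) = f.
Proof. by apply/ffunP => j; rewrite ffunE; case: eqP => // ->. Qed.

Lemma ffun_set_invariant_const (B : Type) (F : {ffun I -> A} -> B) :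
  (forall f k v, F (ffun_set f k v) = F f) -> forall f g, F f = F g.
Proof.
move=> Fset f g.
suff agree_off (s : seq I) (h : {ffun I -> A}) :
    (forall k, k \notin s -> h k = g k) -> F h = F g.
  by apply: (agree_off (enum I)) => k; rewrite mem_enum.
elim: s h => [|x s IHs] h hg; first by congr F; apply/ffunP => k; exact: hg.
rewrite -(Fset h x (g x)); apply: IHs => k ks; rewrite ffunE.
by case: eqP => [-> //|/eqP kx]; apply: hg; rewrite inE negb_or kx.
Qed.

Lemma big_ffun_set (R : nmodType) (g : {ffun I -> A}) (k : I) (F : {ffun I -> A} -> R) :
  \sum_(h : {ffun I -> A} | [forall j, (j != k) ==> (h j == g j)]) F h
  = \sum_(v : A) F (ffun_set g k v).
Proof.
rewrite (reindex_onto (ffun_set g k) (fun h => h k)) => [|h /forallP hg].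
  apply: eq_bigl => v; rewrite ffunE eqxx eqxx andbT.
  by apply/forallP => j; apply/implyP; rewrite ffunE => /negbTE ->.
apply/ffunP => j; rewrite ffunE; case: eqP => [-> //|/eqP jk].
by apply/esym/eqP; exact: (implyP (hg j) jk).
Qed.

End FfunSet.

Lemma big_first_index_prod (R : comPzSemiRingType) m n (i : 'I_n) (F : 'I_n -> R) :
  \sum_(f : {ffun 'I_m.+1 -> 'I_n} | f ord0 == i) \prod_(k | k != ord0) F (f k)
  = (\sum_j F j) ^+ m.
Proof.
have -> : (\sum_j F j) ^+ m = \prod_(k : 'I_m.+1 | k != ord0) \sum_j F j.
  by rewrite prodr_const cardC1 card_ord.
rewrite (big_distr_big_dep i) /=; apply: eq_bigl => f.
apply/eqP/pfamilyP => [f0|[/subsetP supp _]]; last first.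
  by apply/eqP/negPn/negP => /(supp ord0); rewrite unfold_in /=.
split=> //; apply/subsetP => k; rewrite unfold_in /=.
by apply: contraNN => /eqP ->; rewrite f0.
Qed.

Lemma first_index_fixedE m n (f : {ffun 'I_m.+1 -> 'I_n}) (i : 'I_n) :
  [forall k : 'I_m.+1, (val k == 0%N) ==> (f k == i)] = (f ord0 == i).
Proof.
apply/forallP/idP => [/(_ ord0) // | /eqP f0 k]; apply/implyP => /eqP k0.
by rewrite (_ : k = ord0) ?f0 //; apply: val_inj.
Qed.

Section IndexSign.
Variables (R : comPzRingType) (m : nat).
Implicit Type f : {ffun 'I_m -> 'I_2}.

Definition index_sign f : R := \prod_k (-1) ^+ f k.

Lemma index_signD1 f k : index_sign f = (-1) ^+ f k * \prod_(j | j != k) (-1) ^+ f j.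
Proof. exact: bigD1. Qed.

Lemma index_sign_set f k v :
  index_sign (ffun_set f k v) = (-1) ^+ v * \prod_(j | j != k) (-1) ^+ f j.
Proof.
rewrite (index_signD1 _ k) ffunE eqxx; congr (_ * _).
by apply: eq_bigr => j /negbTE jk; rewrite ffunE jk.
Qed.

Lemma index_sign_sqr f : index_sign f * index_sign f = 1.
Proof.
by rewrite -big_split; apply: big1 => k _ /=; rewrite -exprD -signr_odd addnn odd_double.
Qed.

Lemma index_sign0 : index_sign [ffun=> ord0] = 1.
Proof. by apply: big1 => k _; rewrite ffunE expr0. Qed.

End IndexSign.

Lemma index_sign_corner (R : comPzRingType) m (v w : 'I_2) :
  index_sign R (ffun_set [ffun=> w] (ord0 : 'I_m.+1) v) = (-1) ^+ v * ((-1) ^+ w) ^+ m.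
Proof.
rewrite index_sign_set; congr (_ * _).
rewrite (eq_bigr (fun=> (-1) ^+ w)) => [|j _]; last by rewrite ffunE.
by rewrite prodr_const cardC1 card_ord.
Qed.

Lemma irreducible_corner_neq0 (R : nzRingType) m (P : tensor R m.+1 2) (v w : 'I_2) :
  tensor_irreducible P -> v != w -> P (ffun_set [ffun=> w] ord0 v) != 0.
Proof.
move=> Pirr vw; apply/eqP => P0; apply: Pirr; exists [set v]; split.
- by apply/set0Pn; exists v; rewrite inE.
- by apply/eqP => /setP /(_ w); rewrite !inE eq_sym (negbTE vw).
move=> f f0 f_rest; rewrite -P0; congr P; apply/ffunP => k; rewrite !ffunE.
case: eqP => [-> | /eqP k0]; first by apply/eqP; rewrite -in_set1; exact: f0.
have : f k \notin [set v] by apply: f_rest => kv; move/eqP: k0; apply; apply: val_inj.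
by rewrite in_set1; case: (ord2P (f k)) (ord2P v) (ord2P w) vw => -> [->|->] [->|->].
Qed.

Section SymmetricTransitionDim2.
Variables (R : realFieldType) (m : nat) (P : tensor R m.+1 2).
Hypotheses (Psym : tensor_symmetric P) (Ptr : transition_tensor P).

Lemma transition_first_index f :
  P (ffun_set f ord0 ord0) + P (ffun_set f ord0 ord_max) = 1.
Proof.
by rewrite -(sum_ord2 (fun v => P (ffun_set f ord0 v))) -big_ffun_set; exact: Ptr.2.
Qed.

Lemma symmetric_ffun_set f k v :
  P (ffun_set f k v) = P (ffun_set [ffun j => f (tperm ord0 k j)] ord0 v).
Proof.
rewrite -(Psym (tperm ord0 k)); congr P; apply/ffunP => j; rewrite !ffunE.
by case: tpermP => [->|->|/eqP/negbTE-> /eqP/negbTE->]; rewrite ?eqxx // eq_sym.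
Qed.

Lemma transition_flip f k : P (ffun_set f k ord0) + P (ffun_set f k ord_max) = 1.
Proof. by rewrite !(symmetric_ffun_set f k) transition_first_index. Qed.

Let deviation f := (P f - 2^-1) * index_sign R f.

Lemma deviation_set f k v : deviation (ffun_set f k v) = deviation f.
Proof.
have flip : deviation (ffun_set f k ord_max) = deviation (ffun_set f k ord0).
  rewrite /deviation !index_sign_set expr0 expr1 mulN1r mul1r.
  have -> : P (ffun_set f k ord_max) = 1 - P (ffun_set f k ord0).
    by rewrite -(transition_flip f k) addrC addKr.
  by field.
have set_any w : deviation (ffun_set f k w) = deviation (ffun_set f k ord0).
  by case: (ord2P w) => ->; rewrite ?flip.
by rewrite set_any -{2}(ffun_set_id f k) set_any.
Qed.

Lemma symmetric_transition_affine f :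
  P f = 2^-1 + (P [ffun=> ord0] - 2^-1) * index_sign R f.
Proof.
have := ffun_set_invariant_const deviation_set f [ffun=> ord0].
rewrite /deviation index_sign0 mulr1 => <-.
by rewrite -mulrA index_sign_sqr mulr1 addrC subrK.
Qed.

Lemma stationary_sumE (i : 'I_2) (z : 'I_2 -> R) :
  \sum_(f : {ffun 'I_m.+1 -> 'I_2} | [forall k : 'I_m.+1, (val k == 0%N) ==> (f k == i)])
     P f * \prod_(k : 'I_m.+1 | val k != 0%N) z (f k)
  = 2^-1 * (z ord0 + z ord_max) ^+ m
    + (P [ffun=> ord0] - 2^-1) * (-1) ^+ i * (z ord0 - z ord_max) ^+ m.
Proof.
under eq_bigl do rewrite first_index_fixedE.
rewrite (eq_bigr (fun f : {ffun 'I_m.+1 -> 'I_2} => 2^-1 * \prod_(k | k != ord0) z (f k)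
   + (P [ffun=> ord0] - 2^-1) * (-1) ^+ i * \prod_(k | k != ord0) ((-1) ^+ f k * z (f k))))
   => [|f /eqP f0]; last first.
  by rewrite symmetric_transition_affine (index_signD1 _ f ord0) f0 big_split /=; ring.
rewrite big_split /= -!mulr_sumr big_first_index_prod.
rewrite (big_first_index_prod m i (fun j => (-1) ^+ j * z j)) !sum_ord2 /= expr0 expr1.
by rewrite mul1r mulN1r.
Qed.

Hypothesis Pirr : tensor_irreducible P.

Lemma irreducible_const0_neq1 : P [ffun=> ord0] != 1.
Proof.
have := irreducible_corner_neq0 Pirr (isT : ord_max != ord0 :> 'I_2).
rewrite symmetric_transition_affine index_sign_corner expr1n mulr1 /= expr1.
by apply: contra => /eqP P1; rewrite P1; apply/eqP; field.
Qed.

Lemma irreducible_const0_neq0 : ~~ odd m -> P [ffun=> ord0] != 0.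
Proof.
move=> m_even; have := irreducible_corner_neq0 Pirr (isT : ord0 != ord_max :> 'I_2).
rewrite symmetric_transition_affine index_sign_corner expr0 mul1r /= expr1.
by rewrite -signr_odd (negbTE m_even) expr0 mulr1 addrC subrK.
Qed.

End SymmetricTransitionDim2.

Lemma power_fixed_point_eq0 (R : realDomainType) (c t : R) n :
  (0 < n)%N -> `|t| <= 1 -> `|c| <= 1 -> c != 1 -> (~~ odd n -> c != -1) ->
  t = c * t ^+ n -> t = 0.
Proof.
case: n => // n _ t_le1 c_le1 c_neq1 c_neqN1 t_fix; apply/eqP/contraT => t_neq0.
have ct1 : c * t ^+ n = 1.
  by apply: (mulIf t_neq0); rewrite mul1r -mulrA -exprSr -t_fix.
have c_abs1 : `|c| = 1.
  apply/eqP; rewrite eq_le c_le1 -{1}(normr1 R) -ct1 normrM normrX ler_piMr //.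
  by rewrite exprn_ile1.
move: c_abs1; case: (ger0P c) => [_ c1 | _ /eqP]; first by rewrite c1 eqxx in c_neq1.
rewrite eqr_oppLR => /eqP c_eqN1.
have t_pow : t ^+ n = -1 by rewrite -ct1 c_eqN1 mulN1r opprK.
case: (boolP (odd n)) => [n_odd | n_even].
  by move: c_neqN1; rewrite /= n_odd c_eqN1 eqxx => /(_ isT).
by have := exprn_even_ge0 t n_even; rewrite t_pow; lra.
Qed.

Theorem corollary2p2 (R : realFieldType) (m : nat) (P : tensor R m 2) :
  (3 <= m)%N ->
  tensor_symmetric P ->
  tensor_irreducible P ->
  transition_tensor P ->
  forall z : 'I_2 -> R, stationary_prob P z <-> (forall i, z i = 2^-1).
Proof.
case: m P => [//|m] P m_ge3 Psym Pirr Ptr z.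
have m_gt0 : (0 < m)%N := ltnW m_ge3.
move: (Ptr.1 [ffun=> ord0]) (irreducible_const0_neq1 Psym Ptr Pirr).
move: (irreducible_const0_neq0 Psym Ptr Pirr).
set p0 := P [ffun=> ord0] => p0_neq0 /andP[p0_ge0 p0_le1] p0_neq1.
have c_abs : `|2 * (p0 - 2^-1)| <= 1 by rewrite ler_norml; lra.
have c_neq1 : 2 * (p0 - 2^-1) != 1.
  by apply: contraNneq p0_neq1 => c1; apply/eqP; lra.
have c_neqN1 : ~~ odd m -> 2 * (p0 - 2^-1) != -1.
  by move=> /p0_neq0; apply: contraNneq => cN1; apply/eqP; lra.
rewrite /stationary_prob sum_ord2; split => [[z_ge0 z_sum z_stat] i | z_half].
  have := z_stat ord0; have := z_stat ord_max.
  rewrite !(stationary_sumE Psym Ptr) -/p0 z_sum expr1n mulr1 /= expr0 expr1 => z1E z0E.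
  have t_abs : `|z ord0 - z ord_max| <= 1.
    by have := z_ge0 ord0; have := z_ge0 ord_max; rewrite ler_norml; lra.
  have t0 : z ord0 - z ord_max = 0.
    by apply: (power_fixed_point_eq0 m_gt0 t_abs c_abs c_neq1 c_neqN1); lra.
  by case: (ord2P i) => ->; lra.
have half_sum : 2^-1 + 2^-1 = 1 :> R by lra.
split=> [i | | i]; [by rewrite z_half; lra | by rewrite !z_half |].
rewrite (stationary_sumE Psym Ptr) !z_half half_sum subrr expr1n expr0n eqn0Ngt m_gt0 /=.
by rewrite mulr1 mulr0 addr0.
Qed.
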